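(* Let $\Gamma=(V,\mathcal E)$ be a $\mathbb Z^d$-periodic graph with fundamental graph $\Gamma_*=(V_*,\mathcal E_* )$, $\nu=\#V_*$. (i) There exists a subgraph $T=(V_T,\mathcal E_T)$ of $\Gamma$ such that $T$ is a tree (connected and without cycles) and $V_T$ consists of $\nu$ vertices of $\Gamma$ which are pairwise not $\mathbb Z^d$-equivalent. (ii) For edge indices defined with respect to the fundamental vertex set $V_0=V_T$ of such a tree, the number $\beta=\sum_{v\in V_*}\beta_v/\varkappa_v$ (where $\beta_v$ is the number of bridges of $\Gamma_*$ starting at $v$) satisfies $$\beta\le 1\ \text{ if } \nu=1,\qquad \beta\le \nu-\sum_{v\in V_*}\frac{1}{\varkappa_v}\ \text{ if }\nu\ge2.$$
   Context: A $\mathbb Z^d$-periodic graph is a connected infinite graph $\Gamma=(V,\mathcal E)$, possibly with loops and multiple edges, on which $\mathbb Z^d$ acts freely by graph automorphisms ($v\mapsto v+m$), with all vertex degrees finite and finite quotient (fundamental) graph $\Gamma_*=\Gamma/\mathbb Z^d=(V_*,\mathcal E_* )$. Each undirected edge is regarded as two oppositely oriented edges; $\mathcal A$ is the set of oriented edges, $\mathcal A_*=\mathcal A/\mathbb Z^d$; the degree $\varkappa_v$ is the number of oriented edges starting at $v$. Given a set $V_0$ of $\nu$ pairwise non-equivalent vertices, each $v\in V$ is uniquely $v=v_0+[v]$ with $v_0\in V_0$, $[v]\in\mathbb Z^d$; the index of an oriented edge $\mathbf e=(u,v)$ is $\tau(\mathbf e)=[v]-[u]\in\mathbb Z^d$,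 which is invariant under the $\mathbb Z^d$-action and so defined on $\mathcal A_*$. A bridge is an oriented edge with nonzero index. *)

From Stdlib Require Import Relations.Relation_Operators.
From HB Require Import structures.
From mathcomp Require Import all_boot all_order all_algebra.
Set Implicit Arguments. Unset Strict Implicit. Unset Printing Implicit Defensive.
Import Order.TTheory GRing.Theory Num.Theory.

(* A Z^d-periodic graph Gamma is encoded by its quotient data:
   - V : finType     = V_* (vertex orbits; Gamma's vertex set is V * Z^d,
                       with Z^d acting by (v,n)+m = (v,n+m));
   - A : finType     = A_* (orbits of oriented edges);
   - src, tgt : A -> V, shift : A -> Z^d : the orbit a consists of the
     oriented edges  (src a, n) -> (tgt a, n + shift a),  n in Z^d;
   - rev : A -> A    = reversal of orientation (fixed-point-free involution). *)

Local Open Scope ring_scope.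

Definition Zd (d : nat) := 'rV[int]_d.

Definition periodic_data (d : nat) (V A : finType) (src tgt : A -> V)
  (rev : A -> A) (shift : A -> Zd d) : Prop :=
  [/\ involutive rev, (forall a, rev a != a),
      (forall a, src (rev a) = tgt a) & (forall a, shift (rev a) = - shift a)].

Definition gstep (d : nat) (V A : finType) (src tgt : A -> V)
  (shift : A -> Zd d) (x y : V * Zd d) : Prop :=
  exists a, [/\ src a = x.1, tgt a = y.1 & y.2 = x.2 + shift a].

Definition gconnected (d : nat) (V A : finType) (src tgt : A -> V)
  (shift : A -> Zd d) : Prop :=
  forall x y, clos_refl_trans _ (gstep src tgt shift) x y.

(* Index of an oriented edge orbit with respect to the fundamental vertex set
   V_0 = { (v, c v) : v in V }:  tau(a) = [tgt] - [src]. *)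
Definition eindex (d : nat) (V A : finType) (src tgt : A -> V)
  (shift : A -> Zd d) (c : V -> Zd d) (a : A) : Zd d :=
  shift a + c (src a) - c (tgt a).

(* The subgraph of Gamma with vertex set V_T = {(v, c v)} and edge set given by
   F : {set A}; a in F stands for the oriented edge (src a, c (src a)) ->
   (tgt a, c (src a) + shift a) of Gamma. *)
Definition subgraph_of (d : nat) (V A : finType) (src tgt : A -> V)
  (rev : A -> A) (shift : A -> Zd d) (c : V -> Zd d) (F : {set A}) : Prop :=
  (forall a, a \in F -> eindex src tgt shift c a = 0) /\
  (forall a, a \in F -> rev a \in F).

Definition sub_connected (V A : finType) (src tgt : A -> V) (F : {set A}) : Prop :=
  forall u v : V,
    clos_refl_trans _ (fun x y => exists2 a, a \in F & src a = x /\ tgt a = y) u v.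

Definition is_cycle (V A : finType) (src tgt : A -> V) (rev : A -> A)
  (F : {set A}) (s : seq A) : Prop :=
  [/\ s != [::], all (mem F) s,
      cycle (fun a b => tgt a == src b) s,
      uniq (map src s) & (forall a b, a \in s -> b \in s -> b != rev a)].

Definition sub_tree (d : nat) (V A : finType) (src tgt : A -> V)
  (rev : A -> A) (shift : A -> Zd d) (c : V -> Zd d) (F : {set A}) : Prop :=
  [/\ subgraph_of src tgt rev shift c F, sub_connected src tgt F &
      (forall s, ~ is_cycle src tgt rev F s)].

Definition kappa (V A : finType) (src : A -> V) (v : V) : nat :=
  #|[set a | src a == v]|.

Definition nbridges (d : nat) (V A : finType) (src tgt : A -> V)
  (shift : A -> Zd d) (c : V -> Zd d) (v : V) : nat :=
  #|[set a | (src a == v) && (eindex src tgt shift c a != 0)]|.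

Definition beta (d : nat) (V A : finType) (src tgt : A -> V)
  (shift : A -> Zd d) (c : V -> Zd d) : rat :=
  \sum_(v : V) (nbridges src tgt shift c v)%:R / (kappa src v)%:R.

From Stdlib Require Import Relations.Relation_Operators Relations.Operators_Properties.
From HB Require Import structures.
From mathcomp Require Import all_boot all_order all_algebra.
From mathcomp Require Import lra.

Set Implicit Arguments.
Unset Strict Implicit.
Unset Printing Implicit Defensive.

Import Order.TTheory GRing.Theory Num.Theory.
Local Open Scope ring_scope.

(* (i) A Prim-type growth.  A tree on a set S of pairwise non-equivalent
   vertices, all of whose edges have index 0, is extended by an edge orbit a
   leaving S, which exists since Gamma is connected; placing the
   representative of tgt a at c (src a) + shift a gives the new edge index 0,
   and a pendant edge cannot close a cycle.
   (ii) If nu >= 2, every vertex v is the source of an edge of the connected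
   tree T; that edge has index 0, so beta_v <= kappa_v - 1 and
   beta_v / kappa_v <= 1 - 1 / kappa_v.  For nu = 1 use beta_v <= kappa_v. *)

Lemma ler_natr_div1 (R : numFieldType) (n k : nat) :
  (n <= k)%N -> n%:R / k%:R <= 1 :> R.
Proof.
case: k => [|k] nk; first by rewrite invr0 mulr0 ler01.
by rewrite ler_pdivrMr ?ltr0Sn // mul1r ler_nat.
Qed.

Lemma ler_natr_div_subr (R : realFieldType) (n k : nat) :
  (n < k)%N -> n%:R / k%:R <= 1 - 1 / k%:R :> R.
Proof.
case: k => [|k] // nk; have k_gt0 : (0 : R) < k.+1%:R by rewrite ltr0Sn.
have : n.+1%:R <= k.+1%:R :> R by rewrite ler_nat.
rewrite -natr1 ler_pdivrMr // mulrBl mul1r mulVf ?gt_eqF //; lra.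
Qed.

Section PeriodicGraph.

Variables (d : nat) (V A : finType) (src tgt : A -> V) (rev : A -> A).
Variable shift : A -> Zd d.

Local Notation eindex := (eindex src tgt shift).
Local Notation is_cycle := (is_cycle src tgt rev).

Definition tree_step (F : {set A}) (x y : V) : Prop :=
  exists2 a, a \in F & src a = x /\ tgt a = y.

Lemma tree_path_subset (F F' : {set A}) x y : F \subset F' ->
  clos_refl_trans _ (tree_step F) x y -> clos_refl_trans _ (tree_step F') x y.
Proof.
move=> /subsetP sFF'; elim=> [p q [a aF ha]|p|p q r _ pq _ qr].
- by apply: rt_step; exists a; rewrite ?sFF'.
- exact: rt_refl.
- exact: rt_trans pq qr.
Qed.

Definition tree_on (S : {set V}) (c : V -> Zd d) (F : {set A}) : Prop :=
  [/\ {in F, forall a, src a \in S /\ tgt a \in S},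
      subgraph_of src tgt rev shift c F,
      {in S &, forall u v, clos_refl_trans _ (tree_step F) u v} &
      forall s, ~ is_cycle F s].

Lemma tree_on1 (r : V) : tree_on [set r] (fun _ => 0) set0.
Proof.
split.
- by move=> a; rewrite in_set0.
- by split=> a; rewrite in_set0.
- by move=> u v; rewrite !inE => /eqP -> /eqP ->; apply: rt_refl.
- by case=> [|a s] [] //=; rewrite inE.
Qed.

Lemma gconnected_exit (S : {set V}) u w : gconnected src tgt shift ->
  u \in S -> w \notin S -> exists a, src a \in S /\ tgt a \notin S.
Proof.
move=> hcon uS wS.
suff exit x y : clos_refl_trans _ (gstep src tgt shift) x y ->
    x.1 \in S -> y.1 \notin S -> exists a, src a \in S /\ tgt a \notin S.
  exact: (exit (u, 0) (w, 0) (hcon _ _)).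
elim=> [p q [a [<- <- _]]|p|p q r _ pq _ qr] pS rS; first by exists a.
- by rewrite pS in rS.
- by case: (boolP (q.1 \in S)) => qS; [exact: qr | exact: pq].
Qed.

Hypothesis revK : involutive rev.
Hypothesis src_rev : forall a, src (rev a) = tgt a.
Hypothesis shift_rev : forall a, shift (rev a) = - shift a.

Lemma tgt_rev a : tgt (rev a) = src a.
Proof. by rewrite -src_rev revK. Qed.

(* A cycle must leave tgt a through an edge other than rev a, and F has none. *)
Lemma is_cycle_pendant (F : {set A}) a s :
  (forall b, b \in F -> src b != tgt a /\ tgt b != tgt a) -> src a != tgt a ->
  is_cycle (a |: (rev a |: F)) s -> is_cycle F s.
Proof.
move=> Fw aw [s_nil /allP sF s_cyc s_uniq s_rev].
have a_notin : a \notin s.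
  apply/negP => a_s; have /eqP s_next := next_cycle s_cyc a_s.
  have b_s : next s a \in s by rewrite mem_next.
  move: (sF _ b_s); rewrite !inE => /or3P[/eqP ba|/eqP bra|bF].
  - by move: s_next; rewrite ba => ta; rewrite ta eqxx in aw.
  - by move: (s_rev _ _ a_s b_s); rewrite bra eqxx.
  - by have [+ _] := Fw _ bF; rewrite -s_next eqxx.
have ra_notin : rev a \notin s.
  apply/negP => ra_s; have /eqP s_prev := prev_cycle s_cyc ra_s.
  have b_s : prev s (rev a) \in s by rewrite mem_prev.
  move: (sF _ b_s); rewrite !inE => /or3P[/eqP ba|/eqP bra|bF].
  - by rewrite -ba b_s in a_notin.
  - by move: s_prev; rewrite bra src_rev tgt_rev => at_; rewrite at_ eqxx in aw.
  - by have [_ +] := Fw _ bF; rewrite s_prev src_rev eqxx.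
split=> //; apply/allP => b b_s.
move: (sF _ b_s); rewrite !inE => /or3P[/eqP ba|/eqP bra|//].
- by rewrite -ba b_s in a_notin.
- by rewrite -bra b_s in ra_notin.
Qed.

Lemma tree_on_extend S c F a : tree_on S c F ->
  src a \in S -> tgt a \notin S ->
  exists c' F', tree_on (tgt a |: S) c' F'.
Proof.
move=> [FS [F_idx F_rev] S_conn F_acyc] aS aS'.
set w := tgt a in aS' *.
have a_loop : src a != w by apply/eqP => e; rewrite -e aS in aS'.
have Fw b : b \in F -> src b != w /\ tgt b != w.
  by move=> bF; have [sb tb] := FS _ bF; split; apply/eqP => e; rewrite -e ?sb ?tb in aS'.
pose c' v := if v == w then c (src a) + shift a else c v.
have c'S v : v \in S -> c' v = c v.
  by move=> vS; rewrite /c' ifN //; apply/eqP => e; rewrite -e vS in aS'.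
pose F' := a |: (rev a |: F).
have sFF' : F \subset F' by apply/subsetP => b bF; rewrite !inE bF !orbT.
exists c', F'; split.
- move=> b; rewrite !inE => /or3P[/eqP->|/eqP->|/FS[-> ->]].
  + by rewrite aS eqxx orbT.
  + by rewrite src_rev tgt_rev aS eqxx orbT.
  + by rewrite !orbT.
- split=> b; rewrite !inE => /or3P[/eqP->|/eqP->|bF].
  + by rewrite /eindex /c' eqxx ifN // (addrC (shift a)) subrr.
  + by rewrite /eindex src_rev tgt_rev /c' eqxx ifN // shift_rev addrCA addNr addr0 subrr.
  + by have [sb tb] := FS _ bF; move: (F_idx _ bF); rewrite /eindex !c'S.
  + by rewrite eqxx orbT.
  + by rewrite revK eqxx.
  + by rewrite F_rev ?orbT.
- have S_conn' : {in S &, forall u v, clos_refl_trans _ (tree_step F') u v}.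
    by move=> u v uS vS; exact: tree_path_subset sFF' (S_conn _ _ uS vS).
  have to_w u : u \in S -> clos_refl_trans _ (tree_step F') u w.
    move=> uS; apply: rt_trans (S_conn' _ _ uS aS) _.
    by apply: rt_step; exists a; rewrite ?inE ?eqxx.
  have from_w u : u \in S -> clos_refl_trans _ (tree_step F') w u.
    move=> uS; apply: rt_trans _ (S_conn' _ _ aS uS).
    by apply: rt_step; exists (rev a); rewrite ?inE ?eqxx ?orbT ?src_rev ?tgt_rev.
  move=> u v; rewrite !inE => /orP[/eqP->|uS] /orP[/eqP->|vS].
  + exact: rt_refl.
  + exact: from_w.
  + exact: to_w.
  + exact: S_conn'.
- by move=> s /(is_cycle_pendant Fw a_loop); apply: F_acyc.
Qed.

Lemma exists_tree_on k : gconnected src tgt shift -> (k < #|V|)%N ->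
  exists S c F, tree_on S c F /\ #|S| = k.+1.
Proof.
move=> hcon; elim: k => [|k IH] hk.
  have [r _] : exists r : V, r \in predT by apply/card_gt0P.
  by exists [set r], (fun _ => 0), set0; rewrite cards1; split; first exact: tree_on1.
have [S [c [F [hT hS]]]] := IH (ltnW hk).
have [u uS] : exists u, u \in S by apply/card_gt0P; rewrite hS.
have [w wS] : exists w, w \notin S.
  apply/existsP; rewrite -negb_forall; apply: contraTN hk => /forallP S_full.
  by rewrite -hS -ltnNge (_ : S = setT) ?cardsT // ; apply/setP => x; rewrite inE S_full.
have [a [aS aS']] := gconnected_exit hcon uS wS.
have [c' [F' hT']] := tree_on_extend hT aS aS'.
by exists (tgt a |: S), c', F'; rewrite cardsU1 aS' hS.
Qed.

Lemma exists_sub_tree : gconnected src tgt shift -> (0 < #|V|)%N ->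
  exists c F, sub_tree src tgt rev shift c F.
Proof.
move=> hcon V_gt0; have hk : (#|V|.-1 < #|V|)%N by rewrite prednK.
have [S [c [F [[_ F_sub S_conn F_acyc] hS]]]] := exists_tree_on hcon hk.
have ST : S = setT by apply/eqP; rewrite eqEcard subsetT cardsT hS prednK //=.
by exists c, F; split=> // u v; apply: S_conn; rewrite ST inE.
Qed.

Lemma nbridges_le_kappa c v : (nbridges src tgt shift c v <= kappa src v)%N.
Proof. by apply: subset_leq_card; apply/subsetP => a; rewrite !inE => /andP[]. Qed.

Lemma nbridges_lt_kappa c v a : src a = v -> eindex c a = 0 ->
  (nbridges src tgt shift c v < kappa src v)%N.
Proof.
move=> av a0; apply: proper_card; apply/properP; split.
  by apply/subsetP => b; rewrite !inE => /andP[].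
by exists a; rewrite !inE av eqxx // a0 eqxx.
Qed.

Lemma sub_connected_src (F : {set A}) v : (1 < #|V|)%N ->
  sub_connected src tgt F -> exists2 a, a \in F & src a = v.
Proof.
move=> /card_gt1P[x [y [_ _ xy]]] F_conn.
have [u uv] : exists u, u != v.
  by case: (eqVneq x v) => [xv|]; [exists y; rewrite -xv eq_sym | exists x].
have /clos_rt_rt1n_iff path_vu := F_conn v u.
by case: path_vu uv => [|? z [a aF [sa _]] _] uv; [rewrite eqxx in uv | exists a].
Qed.

Lemma beta_le_card c : beta src tgt shift c <= #|V|%:R.
Proof.
have -> : #|V|%:R = \sum_(v : V) 1 :> rat by rewrite sumr_const.
rewrite ler_sum // => v _.
exact/ler_natr_div1/nbridges_le_kappa.
Qed.

Lemma beta_le_sub_tree c F : (1 < #|V|)%N -> sub_tree src tgt rev shift c F ->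
  beta src tgt shift c <= #|V|%:R - \sum_(v : V) 1 / (kappa src v)%:R.
Proof.
move=> V_gt1 [[F_idx _] F_conn _].
have -> : #|V|%:R - \sum_(v : V) 1 / (kappa src v)%:R =
    \sum_(v : V) (1 - 1 / (kappa src v)%:R) :> rat by rewrite sumrB sumr_const.
rewrite ler_sum // => v _.
have [a aF av] := sub_connected_src v V_gt1 F_conn.
exact/ler_natr_div_subr/(nbridges_lt_kappa av)/F_idx.
Qed.

End PeriodicGraph.

Theorem lemma3p1 (d : nat) (V A : finType) (src tgt : A -> V)
  (rev : A -> A) (shift : A -> Zd d) :
  (0 < d)%N -> (0 < #|V|)%N ->
  periodic_data src tgt rev shift ->
  gconnected src tgt shift ->
  (exists (c : V -> Zd d) (F : {set A}), sub_tree src tgt rev shift c F) /\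
  (forall (c : V -> Zd d) (F : {set A}), sub_tree src tgt rev shift c F ->
     if #|V| == 1%N then beta src tgt shift c <= 1
     else beta src tgt shift c <= #|V|%:R - \sum_(v : V) 1 / (kappa src v)%:R).
Proof.
move=> _ V_gt0 [revK _ src_rev shift_rev] hcon.
split; first exact: exists_sub_tree revK src_rev shift_rev hcon V_gt0.
move=> c F hT; case: ifP => [/eqP V1 | V_ne1].
  by have := beta_le_card src tgt shift c; rewrite V1.
apply: beta_le_sub_tree hT.
by move: V_gt0 V_ne1; case: #|V| => [|[|]].
Qed.
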